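(* Let $Q$ be a sketch with $d$ parameter holes, let $z$ be a trajectory, and let $\theta,\theta'\in\mathbb{R}^d$ satisfy $\theta\le\theta'$ componentwise. Then $[\![Q_\theta]\!](z)\ge[\![Q_{\theta'}]\!](z)$.
   Context: Fix a set $\mathcal{X}$ of states. A trajectory is a finite sequence $z=(x_0,\dots,x_{n-1})\in\mathcal{X}^*$ of length $|z|=n$; for $0\le i\le j\le n$ write $z_{i:j}=(x_i,\dots,x_{j-1})$ (the empty sequence if $i=j$). Fix a set of predicates of two kinds: a non-parametric predicate $\varphi$ comes with a satisfaction function $\mathsf{sat}_\varphi:\mathcal{X}^*\to\{0,1\}$, and a parametric predicate $\varphi$ comes with a bounded scoring function $\iota_\varphi:\mathcal{X}^*\to\mathbb{R}$. Sketches are generated by the grammar $Q::=\varphi_{??i}\mid\varphi\mid Q\,;\,Q\mid Q^k\mid Q\wedge Q$, where in $\varphi_{??i}$ the predicate $\varphi$ is parametric and $??i$ is a parameter hole labelled by an index $i\in\{1,\dots,d\}$ ($d$ being the number of parameter holes of the sketch), in the second case $\varphi$ is non-parametric, and $Q^k$ ($k\ge1$) abbreviates the $k$-fold sequencing $Q\,;\,Q\,;\cdots;\,Q$. For $\theta\in\mathbb{R}^d$, $Q_\theta$ denotes the query obtained by filling each hole $??i$ with $\theta_i$. The (Boolean) semantics of a filled query on a trajectory $z$ of length $n$ is: $[\![\varphi_{\theta_i}]\!](z)=\mathbb{1}(\iota_\varphi(z)\ge\theta_i)$; $[\![\varphi]\!](z)=\mathsf{sat}_\varphi(z)$; $[\![Q_1\wedge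 Q_2]\!](z)=[\![Q_1]\!](z)\wedge[\![Q_2]\!](z)$; $[\![Q_1\,;\,Q_2]\!](z)=\bigvee_{k=0}^{n}\big([\![Q_1]\!](z_{0:k})\wedge[\![Q_2]\!](z_{k:n})\big)$. *)

From Stdlib Require Import Reals List Arith Bool.
Open Scope R_scope.

(* Sketches over a state type X, with parametric predicates indexed by PP
   (scoring functions iota) and non-parametric ones indexed by NP (sat). *)
Inductive sketch (PP NP : Type) : Type :=
| SHole : PP -> nat -> sketch PP NP
| SPred : NP -> sketch PP NP
| SSeq  : sketch PP NP -> sketch PP NP -> sketch PP NP
| SRep  : sketch PP NP -> nat -> sketch PP NP
| SAnd  : sketch PP NP -> sketch PP NP -> sketch PP NP.

Arguments SHole {PP NP}. Arguments SPred {PP NP}. Arguments SSeq {PP NP}.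
Arguments SRep {PP NP}. Arguments SAnd {PP NP}.

Fixpoint wf_sketch {PP NP} (d : nat) (Q : sketch PP NP) : Prop :=
  match Q with
  | SHole _ i => (1 <= i <= d)%nat
  | SPred _ => True
  | SSeq a b => wf_sketch d a /\ wf_sketch d b
  | SRep a k => (1 <= k)%nat /\ wf_sketch d a
  | SAnd a b => wf_sketch d a /\ wf_sketch d b
  end.

Definition slice {X} (z : list X) (i j : nat) : list X :=
  firstn (j - i) (skipn i z).

Definition seq_sem {X} (f g : list X -> bool) (z : list X) : bool :=
  let n := length z in
  existsb (fun k => f (slice z 0 k) && g (slice z k n)) (seq 0 (S n)).

Fixpoint rep_sem {X} (f : list X -> bool) (k : nat) : list X -> bool :=
  match k with
  | O | S O => f
  | S k' => seq_sem f (rep_sem f k')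
  end.

Fixpoint sem {X PP NP} (iota : PP -> list X -> R) (sat : NP -> list X -> bool)
    (theta : nat -> R) (Q : sketch PP NP) (z : list X) : bool :=
  match Q with
  | SHole p i => if Rle_dec (theta i) (iota p z) then true else false
  | SPred q => sat q z
  | SSeq a b => seq_sem (sem iota sat theta a) (sem iota sat theta b) z
  | SRep a k => rep_sem (sem iota sat theta a) k z
  | SAnd a b => sem iota sat theta a z && sem iota sat theta b z
  end.

(* Raising a threshold can only turn an atom [iota p z >= theta i] from true
   to false, and every other connective (conjunction, sequencing as an
   existential over split points, repetition) is monotone in its arguments. *)
From Stdlib Require Import Reals List Bool Lra.
Open Scope R_scope.

Definition implies_on {X} (f g : list X -> bool) : Prop :=
  forall z, f z = true -> g z = true.

Lemma seq_sem_mono {X} (f f' g g' : list X -> bool) :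
  implies_on f f' -> implies_on g g' -> implies_on (seq_sem f g) (seq_sem f' g').
Proof.
  intros Hf Hg z. unfold seq_sem. rewrite !existsb_exists.
  intros [k [Hk Hfg]]. exists k. split; [exact Hk|].
  apply andb_true_iff in Hfg as [H1 H2].
  rewrite Hf, Hg; auto.
Qed.

Lemma rep_sem_mono {X} (f f' : list X -> bool) (k : nat) :
  implies_on f f' -> implies_on (rep_sem f k) (rep_sem f' k).
Proof.
  intros Hf. induction k as [|[|k] IH]; simpl; auto.
  apply seq_sem_mono; assumption.
Qed.

Lemma threshold_antitone (t t' s : R) :
  t <= t' ->
  (if Rle_dec t' s then true else false) = true ->
  (if Rle_dec t s then true else false) = true.
Proof.
  intros Htt'. destruct (Rle_dec t' s); [|discriminate].
  destruct (Rle_dec t s); [reflexivity|lra].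
Qed.

Lemma sem_antitone {X PP NP : Type} (iota : PP -> list X -> R)
    (sat : NP -> list X -> bool) (d : nat) (theta theta' : nat -> R)
    (Hle : forall i, (1 <= i <= d)%nat -> theta i <= theta' i)
    (Q : sketch PP NP) :
  wf_sketch d Q -> implies_on (sem iota sat theta' Q) (sem iota sat theta Q).
Proof.
  induction Q as [p i|q|Q1 IH1 Q2 IH2|Q1 IH k|Q1 IH1 Q2 IH2]; simpl; intros HQ.
  - intros z. apply threshold_antitone, Hle, HQ.
  - intros z; auto.
  - destruct HQ. apply seq_sem_mono; auto.
  - destruct HQ. apply rep_sem_mono; auto.
  - destruct HQ as [HQ1 HQ2]. intros z.
    rewrite !andb_true_iff. intros [H1 H2]. split; [apply IH1|apply IH2]; assumption.
Qed.

Theorem lemma1 (X PP NP : Type) (iota : PP -> list X -> R)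
    (sat : NP -> list X -> bool)
    (iota_bounded : forall p, exists B, forall z, Rabs (iota p z) <= B)
    (d : nat) (Q : sketch PP NP) (HQ : wf_sketch d Q) (z : list X)
    (theta theta' : nat -> R)
    (Hle : forall i, (1 <= i <= d)%nat -> theta i <= theta' i) :
  Bool.le (sem iota sat theta' Q z) (sem iota sat theta Q z).
Proof.
  pose proof (sem_antitone iota sat d theta theta' Hle Q HQ z) as Himpl.
  destruct (sem iota sat theta' Q z); simpl; auto.
Qed.
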